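(* Let $k\ge 3$ be odd and $i\in\{1,\ldots,k-1\}$ such that $\binom{k}{i}$ and $\binom{k-1}{i}$ are both odd. Then $\lambda_{k-i+1}-\lambda_{k-i-1}\equiv 2\pmod 4$.
   Context: For $0\le i\le k$ and $j=0,\ldots,k$ define $\lambda_j=\sum_{\ell=0}^{k-i}(-1)^\ell\binom{j}{\ell}\binom{k-j}{i-j+\ell}^2$, with the convention $\binom{a}{b}=0$ unless $0\le b\le a$; these are the eigenvalues of the graph $J(2k,k,i)$ on $k$-subsets of $\{1,\ldots,2k\}$ (adjacent iff intersection has size $i$). *)

From mathcomp Require Import all_boot all_order all_algebra.
Set Implicit Arguments. Unset Strict Implicit. Unset Printing Implicit Defensive.
Import GRing.Theory Num.Theory.
Local Open Scope ring_scope.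

Definition binZ (a : nat) (b : int) : int :=
  match b with
  | Posz n => ('C(a, n))%:Z
  | Negz _ => 0
  end.

(* lambda_j of J(2k,k,i):
   sum_{l=0}^{k-i} (-1)^l C(j,l) C(k-j, i-j+l)^2 *)
Definition lam (k i j : nat) : int :=
  \sum_(0 <= l < (k - i).+1)
     (-1) ^+ l * ('C(j, l))%:Z * (binZ (k - j) (i%:Z - j%:Z + l%:Z)) ^+ 2.

From mathcomp Require Import all_boot all_order all_algebra.
From mathcomp Require Import ring zify.
Import GRing.Theory.

(* Write Q_a = sum_t C(a,t)^2 x^t; then lambda_j is the coefficient of x^(k-i) in
   (1-x)^j Q_(k-j).  By Lucas' theorem mod 2, oddness of C(k-1,i) with k odd forces
   k = 2P+2Q+3 and i = 2Q+2 with C(P+Q+1,P) odd.  The difference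
   lambda_(k-i+1) - lambda_(k-i-1) is then the coefficient of x^(2P+1) in
   (1-x)^(2P) ((1-x)^2 Q_a - Q_(a+2)) with a = 2Q+1, and by Pascal's rule the second
   factor has even coefficients, so the difference is 2X.  Reducing X mod 2 with
   Lucas' theorem leaves C(P+Q,P) + sum_u C(P,u+1) C(Q,u+1) C(Q,u), which is odd by
   induction on P, since halving P and Q gives a simple recursion for that sum. *)

Lemma odd_binSS n m : odd 'C(n.+2, m.+2) = odd 'C(n, m.+2) (+) odd 'C(n, m).
Proof. by rewrite !binS -addnA (addnA 'C(n, m.+1)) addnn !oddD odd_double. Qed.

Lemma odd_bin_double_even a b :
  odd 'C(a.*2, b.*2) = odd 'C(a, b) /\ ~~ odd 'C(a.*2, (b.*2).+1).
Proof.
elim: a b => [|a IHa] [|b] //; first by rewrite bin0 bin1 odd_double.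
have [IHe IHo] := IHa b; have [IHe' IHo'] := IHa b.+1.
rewrite !doubleS !odd_binSS -!doubleS IHe' IHe (negbTE IHo) (negbTE IHo') /=.
by rewrite binS oddD.
Qed.

Lemma odd_bin_double (x y : bool) a b :
  odd 'C(x + a.*2, y + b.*2) = (y <= x) && odd 'C(a, b).
Proof.
have [even_even odd_even] := odd_bin_double_even a b.
case: x y => [] [] /=; rewrite ?add0n ?add1n ?even_even ?(negbTE odd_even) //.
  by rewrite binS oddD even_even (negbTE odd_even).
case: b even_even odd_even => [|b] even_even _; first by rewrite !bin0.
by rewrite doubleS binS oddD -doubleS even_even (negbTE (odd_bin_double_even a b).2) addbF.
Qed.

Lemma odd_bin_double_top (x : bool) a n :
  odd 'C(x + a.*2, n) = (odd n <= x) && odd 'C(a, n./2).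
Proof. by rewrite -[in LHS](odd_double_half n) odd_bin_double. Qed.

Lemma odd_bin_pred_decomp k i : odd k -> 0 < i -> odd 'C(k - 1, i) ->
  exists P Q, [/\ k = P.*2 + Q.*2.+1 + 2, i = Q.*2.+1 + 1 & odd 'C(P + Q + 1, P)].
Proof.
move=> k_odd i_gt0.
rewrite -[k](odd_double_half k) k_odd subn1 /= -[in 'C(_, i)](odd_double_half i).
rewrite -[k./2.*2]/(false + k./2.*2) odd_bin_double /= => /andP[i_even bin_odd].
have i_eq : i = i./2.*2 by rewrite -[LHS]odd_double_half; case: (odd i) i_even.
have le_ik : i./2 <= k./2 by rewrite leqNgt; apply: contraTN bin_odd => /bin_small ->.
exists (k./2 - i./2), (i./2).-1; split; [lia | lia |].
by rewrite (_ : _ + 1 = k./2) ?bin_sub //; lia.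
Qed.

Lemma sum_nat_double n (F : nat -> nat) :
  \sum_(0 <= u < n.*2) F u = \sum_(0 <= v < n) (F v.*2 + F v.*2.+1).
Proof.
elim: n => [|n IHn]; first by rewrite !big_geq.
by rewrite doubleS !big_nat_recr //= IHn addnA.
Qed.

Lemma eq_odd_sum (I : Type) (r : seq I) (F G : I -> nat) :
  (forall i, odd (F i) = odd (G i)) ->
  odd (\sum_(i <- r) F i) = odd (\sum_(i <- r) G i).
Proof.
move=> eqFG; apply: (big_ind2 (fun m n => odd m = odd n)) => //.
by move=> m1 n1 m2 n2; rewrite !oddD => -> ->.
Qed.

Lemma sum_bin_mul a b : \sum_(0 <= v < a.+1) 'C(a, v) * 'C(b, v) = 'C(a + b, a).
Proof.
rewrite addnC -binomial.Vandermonde big_mkord; apply: eq_bigr => [[v le_va]] _ /=.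
by rewrite mulnC bin_sub.
Qed.

Definition bin_triple_sum P Q := \sum_(0 <= u < P) 'C(P, u.+1) * 'C(Q, u.+1) * 'C(Q, u).

Lemma bin_triple_sum_widen P Q n : P <= n ->
  \sum_(0 <= u < n) 'C(P, u.+1) * 'C(Q, u.+1) * 'C(Q, u) = bin_triple_sum P Q.
Proof.
move=> le_Pn; rewrite (big_cat_nat (leq0n P) le_Pn) /= [X in _ + X]big1_seq ?addn0 //.
by move=> u /andP[_]; rewrite mem_index_iota => /andP[le_Pu _]; rewrite bin_small ?ltnS.
Qed.

Lemma odd_bin_triple_sum_double (x y : bool) a b :
  odd (bin_triple_sum (x + a.*2) (y + b.*2)) =
  (y && odd (bin_triple_sum a b)) (+) (x && y && odd 'C(a + b, a)).
Proof.
rewrite -(@bin_triple_sum_widen _ _ a.+1.*2); last by rewrite doubleS -add2n leq_add2r; case: x.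
rewrite sum_nat_double (@eq_odd_sum _ _ _
  (fun v => x * y * ('C(a, v) * 'C(b, v)) + y * ('C(a, v.+1) * 'C(b, v.+1) * 'C(b, v)))).
  rewrite big_split -!big_distrr /= oddD !oddM !oddb sum_bin_mul.
  by rewrite bin_triple_sum_widen // addbC.
move=> v; rewrite !oddD !oddM !oddb !odd_bin_double_top /= ?negbK !odd_double !doubleK !uphalf_double.
by case: x y (odd 'C(a, v)) (odd 'C(b, v)) => [] [] [] [] /=; rewrite ?andbT ?andbF.
Qed.

Lemma odd_bin_add_triple_sum P Q :
  odd 'C(P + Q + 1, P) -> odd ('C(P + Q, P) + bin_triple_sum P Q).
Proof.
elim/ltn_ind: P Q => P IH Q.
have [->|P_gt0] := posnP P; first by rewrite !bin0 /bin_triple_sum big_geq.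
have /IH IHa : P./2 < P by rewrite ltn_half_double; lia.
move: (odd_double_half P) (odd_double_half Q) IHa {IH P_gt0}.
move: (odd P) (P./2) (odd Q) (Q./2) => x a y b <- <- {P Q} IHa.
rewrite oddD odd_bin_triple_sum_double.
case: x y => [] [].
- have -> : (true + a.*2 + (true + b.*2) + 1 = true + (a + b).+1.*2)%N by simpl; lia.
  have -> : (true + a.*2 + (true + b.*2) = false + (a + b).+1.*2)%N by simpl; lia.
  by rewrite !odd_bin_double /= -addn1 => /IHa; rewrite oddD addbC.
- have -> : (true + a.*2 + (false + b.*2) + 1 = false + (a + b).+1.*2)%N by simpl; lia.
  by rewrite odd_bin_double.
- have -> : (false + a.*2 + (true + b.*2) + 1 = false + (a + b).+1.*2)%N by simpl; lia.
  have -> : (false + a.*2 + (true + b.*2) = true + (a + b).*2)%N by simpl; lia.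
  by rewrite !odd_bin_double /= addbF -addn1 => /IHa; rewrite oddD.
- have -> : (false + a.*2 + (false + b.*2) + 1 = true + (a + b).*2)%N by simpl; lia.
  have -> : (false + a.*2 + (false + b.*2) = false + (a + b).*2)%N by simpl; lia.
  by rewrite !odd_bin_double /= addbF.
Qed.

Definition binm1 a t := if t is t'.+1 then 'C(a, t') else 0.
Definition binm2 a t := if t is t'.+2 then 'C(a, t') else 0.

Lemma sum_bin_binm1 p a :
  \sum_(0 <= l < p.+2) 'C(p, l) * binm1 a (p.+1 - l) = 'C(p + a, p).
Proof.
rewrite big_nat_recr //= subnn muln0 addn0 -binomial.Vandermonde big_mkord.
by apply: eq_bigr => l _; rewrite subSn // -ltnS.
Qed.

Lemma odd_sum_bin_binm2 P Q :
  odd (\sum_(0 <= l < P.*2.+2)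
         'C(P.*2, l) * ('C(Q.*2.+1, P.*2.+1 - l) * binm2 (Q.*2.+1) (P.*2.+1 - l)))
  = odd (bin_triple_sum P Q).
Proof.
rewrite -doubleS sum_nat_double.
rewrite (@eq_odd_sum _ _ _ (fun v => 'C(P, v) * 'C(Q, P - v) * binm1 Q (P - v))); last first.
  move=> v; have [even_even odd_even] := odd_bin_double_even P v.
  rewrite oddD !oddM even_even (negbTE odd_even) addbF.
  have [le_vP|lt_Pv] := leqP v P; last by rewrite bin_small.
  have -> : (P.*2.+1 - v.*2 = (P - v).*2.+1)%N by rewrite doubleB subSn // leq_double.
  case: (P - v)%N => [|w] /=; first by rewrite !andbF.
  rewrite doubleS -[Q.*2.+1]/(true + Q.*2) -[w.+1.*2.+1]/(true + w.+1.*2).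
  by rewrite -[w.*2.+1]/(true + w.*2) !odd_bin_double /= andbA.
congr odd; rewrite big_nat_rev.
under eq_big_nat => i /andP[_ /ltnSE le_iP] do rewrite add0n subSS subKn // bin_sub //.
by rewrite big_nat_recl //= muln0 add0n.
Qed.

Definition binsq_defect_mod2 a t := binm1 a t + 'C(a, t) * binm2 a t.

Lemma odd_sum_defect_mod2 P Q : odd 'C(P + Q + 1, P) ->
  odd (\sum_(0 <= l < P.*2.+2) 'C(P.*2, l) * binsq_defect_mod2 (Q.*2.+1) (P.*2.+1 - l)).
Proof.
move=> bin_odd; under eq_bigr do rewrite mulnDr.
rewrite big_split oddD sum_bin_binm1 odd_sum_bin_binm2 addnS.
rewrite -[(P.*2 + Q.*2).+1]/(true + (P.*2 + Q.*2)) -doubleD -[P.*2]/(false + P.*2).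
by rewrite odd_bin_double -oddD odd_bin_add_triple_sum.
Qed.

Local Open Scope ring_scope.

Definition binsq_poly a : {poly int} := \poly_(t < a.+1) ('C(a, t)%:Z ^+ 2).

Lemma coef_binsq_poly a t : (binsq_poly a)`_t = 'C(a, t)%:Z ^+ 2.
Proof. by rewrite coef_poly; case: ltnP => // lt_at; rewrite bin_small // expr0n. Qed.

Lemma coef_1subXM (p : {poly int}) t :
  ((1 - 'X) * p)`_t = p`_t - (if t is t'.+1 then p`_t' else 0).
Proof. by rewrite mulrBl mul1r coefB coefXM; case: t. Qed.

Lemma coef_1subX_exp j l : ((1 - 'X) ^+ j : {poly int})`_l = (-1) ^+ l * 'C(j, l)%:Z.
Proof.
elim: j l => [|j IHj] [|l]; rewrite ?expr0 ?coef1 ?exprS ?coef_1subXM ?IHj ?bin0 //=.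
  by rewrite mulr0.
by rewrite binS PoszD exprS; ring.
Qed.

Lemma binZ_sub a r : binZ a (a%:Z - r%:Z) = 'C(a, r)%:Z.
Proof.
have [le_ra|lt_ar] := leqP r a; first by rewrite subzn //= bin_sub.
have -> : a%:Z - r%:Z = Negz (r - a).-1 by rewrite NegzE prednK ?subn_gt0 // -subzn 1?ltnW // opprB.
by rewrite /= bin_small.
Qed.

Lemma lamE k i j : (j <= k)%N -> (i <= k)%N ->
  lam k i j = ((1 - 'X) ^+ j * binsq_poly (k - j))`_(k - i).
Proof.
move=> le_jk le_ik; rewrite coefM /lam big_mkord; apply: eq_bigr => [[l lt_l]] _ /=.
rewrite coef_1subX_exp coef_binsq_poly.
have -> : i%:Z - j%:Z + l%:Z = (k - j)%N%:Z - (k - i - l)%N%:Z by lia.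
by rewrite binZ_sub.
Qed.

Definition binsq_defect a t : int :=
  - (3 * (binm1 a t)%:Z ^+ 2 + 'C(a, t)%:Z * (binm2 a t)%:Z
     + 2 * 'C(a, t)%:Z * (binm1 a t)%:Z + 2 * (binm1 a t)%:Z * (binm2 a t)%:Z).

(* Pascal's rule twice: C(a+2,t) = C(a,t) + 2 C(a,t-1) + C(a,t-2). *)
Lemma coef_binsq_defect a t :
  ((1 - 'X) ^+ 2 * binsq_poly a - binsq_poly a.+2)`_t = 2 * binsq_defect a t.
Proof.
rewrite expr2 -mulrA coefB !coef_1subXM /binsq_defect.
by case: t => [|[|t]] /=; rewrite ?coef_1subXM !coef_binsq_poly /= ?binS ?bin0 ?PoszD; ring.
Qed.

Lemma lam_sub_lam p a :
  lam (p + a + 2) (a + 1) p.+2 - lam (p + a + 2) (a + 1) p =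
  2 * \sum_(0 <= l < p.+2) (-1) ^+ l * 'C(p, l)%:Z * binsq_defect a (p.+1 - l).
Proof.
rewrite !lamE; [|lia..].
have -> : (p + a + 2 - p.+2 = a)%N by lia.
have -> : (p + a + 2 - p = a.+2)%N by lia.
have -> : (p + a + 2 - (a + 1) = p.+1)%N by lia.
rewrite -[in (1 - 'X) ^+ p.+2]addn2 exprD -coefB -mulrA -mulrBr coefM.
under eq_bigr do rewrite coef_binsq_defect coef_1subX_exp mulrCA.
by rewrite -mulr_sumr big_mkord.
Qed.

Lemma dvdz2_sqrD (n : nat) : (2 %| n%:Z ^+ 2 + n%:Z)%Z.
Proof.
have -> : n%:Z ^+ 2 + n%:Z = (n * n.+1)%N%:Z by rewrite PoszM intS; ring.
by rewrite dvdzE /= dvdn2 oddM /= andbN.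
Qed.

Lemma dvdz2_signr_sub l (x : int) : (2 %| (-1) ^+ l * x - x)%Z.
Proof.
rewrite -signr_odd; apply/dvdzP.
by case: (odd l); [exists (- x) | exists 0]; rewrite ?expr1 ?expr0; ring.
Qed.

Lemma dvdz2_binsq_defect a t : (2 %| binsq_defect a t - (binsq_defect_mod2 a t)%:Z)%Z.
Proof.
rewrite /binsq_defect /binsq_defect_mod2 PoszD PoszM.
set y := (binm1 a t)%:Z; set x := 'C(a, t)%:Z; set z := (binm2 a t)%:Z.
have -> : - (3 * y ^+ 2 + x * z + 2 * x * y + 2 * y * z) - (y + x * z) =
          - (y ^+ 2 + y) - 2 * (y ^+ 2 + x * z + x * y + y * z) by ring.
by rewrite rpredB ?rpredN ?dvdz2_sqrD ?dvdz_mulr.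
Qed.

Lemma dvdz2_defect_sum p a :
  (2 %| \sum_(0 <= l < p.+2) (-1) ^+ l * 'C(p, l)%:Z * binsq_defect a (p.+1 - l)
        - (\sum_(0 <= l < p.+2) 'C(p, l) * binsq_defect_mod2 a (p.+1 - l))%N%:Z)%Z.
Proof.
rewrite (big_morph Posz PoszD (erefl 0%:Z)) -sumrB rpred_sum // => l _.
set d := binsq_defect a _; set n := binsq_defect_mod2 a _.
have -> : (-1) ^+ l * 'C(p, l)%:Z * d - ('C(p, l) * n)%N%:Z =
          'C(p, l)%:Z * (((-1) ^+ l * d - d) + (d - n%:Z)) by rewrite PoszM; ring.
by apply/dvdz_mull/rpredD; [exact: dvdz2_signr_sub | exact: dvdz2_binsq_defect].
Qed.

Lemma mul2_modz4 (x : int) n : (2 %| x - n%:Z)%Z -> odd n -> (2 * x %% 4)%Z = 2.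
Proof.
case/dvdzP=> y /eqP; rewrite subr_eq => /eqP -> n_odd.
rewrite -[n in n%:Z](odd_double_half n) n_odd -muln2 PoszD PoszM.
have -> : 2 * (y * 2 + (1%N%:Z + (n./2)%:Z * 2%N%:Z)) = (y + (n./2)%:Z) * 4 + 2 by ring.
by rewrite modzMDl.
Qed.

Theorem mainTheorem13 (k i : nat) :
  (3 <= k)%N -> odd k -> (1 <= i)%N -> (i <= k - 1)%N ->
  odd 'C(k, i) -> odd 'C(k - 1, i) ->
  ((lam k i (k - i + 1) - lam k i (k - i - 1)) %% 4)%Z = 2.
Proof.
(* The other hypotheses follow from these three; odd 'C(k, i) by Lucas' theorem. *)
move=> _ k_odd i_gt0 _ _ bin_odd.
have [P [Q [-> -> PQ_odd]]] := odd_bin_pred_decomp _ _ k_odd i_gt0 bin_odd.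
have -> : (P.*2 + Q.*2.+1 + 2 - (Q.*2.+1 + 1) + 1 = P.*2.+2)%N by lia.
have -> : (P.*2 + Q.*2.+1 + 2 - (Q.*2.+1 + 1) - 1 = P.*2)%N by lia.
rewrite lam_sub_lam; apply: mul2_modz4 (dvdz2_defect_sum _ _) _.
exact: odd_sum_defect_mod2.
Qed.
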